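(* Let $n$ be even and $1\le k\le n/2$, and define $$\mathcal C_4(n,k)=\{0^k1\vec c1:\ \vec c\in\{0,1\}^{n-k-2},\ w_H(\vec c)=\tfrac n2-2,\ \vec c\text{ has no run of }k\text{ consecutive zeros}\}.$$ Then $\mathcal C_4(n,k)$ is a balanced MU code. Moreover, for a fixed integer $a\ge1$, as $n\to\infty$ over powers of $2$, $$\liminf_{n\to\infty}\ \frac{|\mathcal C_4(n,\log_2 n+a)|}{\frac{2^n}{n\sqrt n}}\ \ge\ \frac{2^a-1}{2^{2a+1}\sqrt{2\pi}}.$$
   Context: Binary alphabet; $w_H$ is Hamming weight. A binary word of even length $n$ is balanced if its Hamming weight is $n/2$. A code $\mathcal C\subseteq\{0,1\}^n$ is mutually uncorrelated (MU) if for any two not necessarily distinct codewords $\vec a,\vec b$, no proper nonempty prefix of $\vec a$ equals a suffix of $\vec b$ of the same length; a balanced MU code is an MU code whose codewords are all balanced. *)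

From mathcomp Require Import all_boot.
Set Implicit Arguments. Unset Strict Implicit. Unset Printing Implicit Defensive.

(* Binary words are sequences of booleans (true = 1, false = 0). *)

Definition wH (w : seq bool) : nat := count id w.

Definition balanced (n : nat) (w : seq bool) : bool := wH w == n./2.

Definition MU (n : nat) (C : {set n.-tuple bool}) : Prop :=
  forall a b : n.-tuple bool, a \in C -> b \in C ->
  forall i : nat, 0 < i < n -> take i (val a) <> drop (n - i) (val b).

Definition balanced_MU (n : nat) (C : {set n.-tuple bool}) : Prop :=
  MU C /\ (forall a : n.-tuple bool, a \in C -> balanced n (val a)).

Definition has_zero_run (k : nat) (c : seq bool) : bool :=
  infix (nseq k false) c.

Definition C4 (n k : nat) : {set n.-tuple bool} :=
  [set w : n.-tuple bool |
     [exists c : (n - k - 2).-tuple bool,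
        [&& val w == nseq k false ++ true :: (val c ++ [:: true]),
            wH (val c) == n./2 - 2
          & ~~ has_zero_run k (val c)]]].

(* Every codeword of C4(n,k) begins with 0^k 1 and ends with 1.  A proper prefix of
   length at most k therefore ends with 0 while every suffix ends with 1.  A longer prefix
   begins with 0^k, and a proper suffix of a codeword can begin with 0^k only if these
   zeros lie in its middle part c, which has no run of k zeros.

   For the count, among the C(N, w) words c of length N = n-k-2 and weight w = n/2-2, at
   most (N-k+1) C(N-k, w) contain a run of k zeros (a union bound over the position of the
   run), and C(N-k, w) 2^k <= C(N, w) because N <= 2w.  With n = 2^m and k = m+a, so that
   2^k = n 2^a, this loses only the factor 1 - 2^-a.  Writing N = 2z+d, w = z+d with
   z = n/2-k and d = k-2, one has C(2z+d, z+d) >= 2^d C(2z, z) (1 - d(d+1)/(4z)), and the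
   Wallis integrals I_j of sin^j over [0, pi/2], through (2z+1) I_(2z+1) I_(2z) = pi/2 and
   I_(2z+1) <= I_(2z), give C(2z, z)^2 >= 2 16^z / (pi (2z+1)). *)

From mathcomp Require Import all_boot zify.

(** * Mutual uncorrelation and balance *)

Definition c4_word k (c : seq bool) := nseq k false ++ true :: (c ++ [:: true]).

Lemma size_c4_word k c : size (c4_word k c) = k + size c + 2.
Proof. by rewrite /c4_word size_cat size_nseq /= size_cat /=; lia. Qed.

Lemma c4_word_inj k : injective (c4_word k).
Proof.
move=> c c' /eqP; rewrite /c4_word eqseq_cat ?size_nseq // eqxx /= eqseq_cons /=.
by move=> /eqP; rewrite !cats1 => /rcons_inj [].
Qed.

Lemma mem_C4 n k (a : n.-tuple bool) : a \in C4 n k ->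
  exists c, [/\ val a = c4_word k c, size c = n - k - 2, wH c = n./2 - 2
              & ~~ has_zero_run k c].
Proof.
by rewrite inE => /existsP [c /and3P [/eqP -> /eqP wc zc]]; exists c; rewrite size_tuple.
Qed.

Lemma take_c4_word_zeros k c i : i <= k -> take i (c4_word k c) = nseq i false.
Proof.
move=> ik; rewrite take_cat size_nseq; case: ltnP => [|ki]; first by rewrite take_nseq // ltnW.
have -> : i = k by apply/eqP; rewrite eqn_leq ik ki.
by rewrite subnn take0 cats0.
Qed.

Lemma prefix_zeros_take_c4_word k c i : k <= i -> prefix (nseq k false) (take i (c4_word k c)).
Proof. by move=> ki; rewrite prefixE size_nseq take_takel // take_size_cat ?size_nseq. Qed.

Lemma zero_run_of_prefix_drop_c4_word k c p : 0 < p -> p + k < size (c4_word k c) ->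
  prefix (nseq k false) (drop p (c4_word k c)) -> has_zero_run k c.
Proof.
rewrite size_c4_word prefixE size_nseq => p0 pk /eqP zeros.
case: (leqP p k) => [pk' | kp].
  move: zeros => /(congr1 (nth false ^~ (k - p))).
  rewrite nth_take ?nth_drop ?nth_nseq; try lia.
  by rewrite subnKC // /c4_word nth_cat size_nseq ltnn subnn; case: ifP.
have drop_w : drop p (c4_word k c) = drop (p - k.+1) c ++ [:: true].
  rewrite /c4_word drop_cat size_nseq ltnNge ltnW //= -subnSK // /= drop_cat.
  by case: ltnP => // ?; rewrite (_ : p - k.+1 - size c = 0) ?drop0 ?drop_oversize //; lia.
rewrite drop_w (takel_cat (T := bool)) in zeros; last by rewrite size_drop; lia.
by rewrite /has_zero_run -zeros; exact: infix_trans (infix_take _ _) (infix_drop _ _).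
Qed.

Lemma nth_c4_word_last k c : nth false (c4_word k c) (k + size c).+1 = true.
Proof.
rewrite /c4_word nth_cat size_nseq ltnNge ltnW ?ltnS ?leq_addr //.
by rewrite (_ : _ - k = (size c).+1) /= ?nth_cat ?ltnn ?subnn //; lia.
Qed.

Lemma C4_MU n k : MU (C4 n k).
Proof.
move=> a b /mem_C4[c [-> _ _ _]] /mem_C4[c' [Eb _ _ no_run]] i /andP[i0 ilt] Ea.
have sb : size (c4_word k c') = n by rewrite -Eb size_tuple.
case: (leqP i k) => [ik | ki].
  move: Ea => /(congr1 (nth false ^~ i.-1)).
  rewrite take_c4_word_zeros // nth_nseq if_same nth_drop Eb.
  rewrite size_c4_word in sb.
  by rewrite (_ : n - i + i.-1 = (k + size c').+1) ?nth_c4_word_last //; lia.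
apply: (negP no_run); apply: (zero_run_of_prefix_drop_c4_word _ _ (n - i)); rewrite ?sb; try lia.
by rewrite -Eb -Ea prefix_zeros_take_c4_word // ltnW.
Qed.

Lemma C4_balanced n k (a : n.-tuple bool) : ~~ odd n -> 0 < k -> a \in C4 n k ->
  balanced n (val a).
Proof.
move=> even_n k0 /mem_C4[c [Ea size_c wc _]].
have size_a : size (c4_word k c) = n by rewrite -Ea size_tuple.
rewrite size_c4_word size_c in size_a.
have n_half : n = n./2 + n./2 by rewrite -{1}(odd_double_half n) (negbTE even_n) addnn.
rewrite /balanced Ea /wH /c4_word count_cat count_nseq /= count_cat /= -/(wH c) wc mul0n.
apply/eqP; lia.
Qed.

(** * Counting the codewords *)

Fixpoint weight_words (N w : nat) : seq (seq bool) :=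
  match N with
  | 0 => if w is 0 then [:: [::]] else [::]
  | N'.+1 => (if w is w'.+1 then map (cons true) (weight_words N' w') else [::])
             ++ map (cons false) (weight_words N' w)
  end.

Lemma count_weight_wordsS (p : pred (seq bool)) N w :
  count p (weight_words N.+1 w) =
  (if w is w'.+1 then count (p \o cons true) (weight_words N w') else 0)
  + count (p \o cons false) (weight_words N w).
Proof. by rewrite /= count_cat count_map; case: w => //= w; rewrite count_map. Qed.

Lemma size_weight_words N w : size (weight_words N w) = 'C(N, w).
Proof.
elim: N w => [|N IH] [|w] //=; first by rewrite size_map IH !bin0.
by rewrite size_cat !size_map !IH binS addnC.
Qed.

Lemma mem_weight_words N w s : s \in weight_words N w -> size s = N /\ wH s = w.
Proof.
elim: N w s => [|N IH] [|w] s //=; first by rewrite inE => /eqP ->.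
  by move=> /mapP [t /IH [<- wt] ->].
by rewrite mem_cat => /orP [] /mapP [t /IH [<- <-] ->].
Qed.

Lemma uniq_weight_words N w : uniq (weight_words N w).
Proof.
have cons_inj b : injective (@cons bool b) by move=> s t [].
elim: N w => [|N IH] [|w] //=; first by rewrite map_inj_uniq.
rewrite cat_uniq !map_inj_uniq // !IH andbT /=.
by apply/hasPn => _ /mapP [s _ ->]; apply/mapP => -[t _].
Qed.

Lemma count_zeros_prefix_weight_words k N w :
  count (prefix (nseq k false)) (weight_words N w) <= 'C(N - k, w).
Proof.
elim: k N w => [|k IH] N w.
  by rewrite subn0 -size_weight_words count_size.
case: N => [|N]; first by case: w.
rewrite count_weight_wordsS subSS; case: w => [|w] /=.
  exact: IH.
by rewrite (@eq_count _ _ pred0) // count_pred0; exact: IH.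
Qed.

Lemma has_zero_runS_cons k x s : has_zero_run k.+1 (x :: s) =
  (~~ x && prefix (nseq k false) s) || has_zero_run k.+1 s.
Proof. by rewrite /has_zero_run infix_consl /=; case: x. Qed.

Lemma count_zero_run_weight_words k N w :
  count (has_zero_run k.+1) (weight_words N w) <= (N - k) * 'C(N - k.+1, w).
Proof.
elim: N w => [|N IH] w; first by case: w.
case: (ltnP N k) => [Nk | kN].
  rewrite (@eq_in_count _ _ pred0) ?count_pred0 // => s /mem_weight_words [size_s _].
  by apply/negP => /size_infix; rewrite size_nseq size_s ltnNge Nk.
have cons_false : count (has_zero_run k.+1 \o cons false) (weight_words N w)
    <= 'C(N - k, w) + (N - k) * 'C(N - k.+1, w).
  under eq_count => s do rewrite /= has_zero_runS_cons.
  rewrite -[X in X <= _]/(count (predU (prefix (nseq k false)) (has_zero_run k.+1)) _).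
  apply: leq_trans (leq_add (count_zeros_prefix_weight_words k N w) (IH w)).
  by rewrite -count_predUI leq_addr.
rewrite count_weight_wordsS subSS; case: w cons_false => [|w] cons_false.
  by apply: leq_trans cons_false _; rewrite !bin0; lia.
have -> : count (has_zero_run k.+1 \o cons true) (weight_words N w) =
          count (has_zero_run k.+1) (weight_words N w).
  by apply: eq_count => s; rewrite /= has_zero_runS_cons.
apply: leq_trans (leq_add (IH w) cons_false) _.
case: (ltnP k N) => [kN' | Nk]; last by rewrite (_ : N - k = 0) //; lia.
have [j Ej] : exists j, N - k.+1 = j by eexists.
have -> : N - k = j.+1 by lia.
have -> : N.+1 - k = j.+2 by lia.
by rewrite Ej binS !mulSn !mulnDr; lia.
Qed.

Lemma bin_le_card_C4_runs n k : k + 2 <= n ->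
  'C(n - k - 2, n./2 - 2) <=
  #|C4 n k| + count (has_zero_run k) (weight_words (n - k - 2) (n./2 - 2)).
Proof.
move=> kn; set N := n - k - 2; set w := n./2 - 2.
set good := map (c4_word k) (filter (predC (has_zero_run k)) (weight_words N w)).
have uniq_good : uniq good.
  by rewrite map_inj_uniq ?filter_uniq ?uniq_weight_words //; exact: c4_word_inj.
have good_C4 : {subset good <= map val (enum (C4 n k))}.
  move=> _ /mapP [c + ->]; rewrite mem_filter => /andP [no_run /mem_weight_words [size_c wc]].
  have size_w : size (c4_word k c) == n by rewrite size_c4_word size_c; apply/eqP; lia.
  have size_c' : size c == N by rewrite size_c.
  rewrite (_ : c4_word k c = val (Tuple size_w)) // map_f // mem_enum inE.
  by apply/existsP; exists (Tuple size_c'); rewrite /= eqxx wc eqxx.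
have := uniq_leq_size uniq_good good_C4.
rewrite size_map size_filter size_map -cardE => card_good.
by rewrite -size_weight_words -(count_predC (has_zero_run k)) addnC leq_add2r.
Qed.

Lemma double_bin_leq_binS M w : M < 2 * w -> 2 * 'C(M, w) <= 'C(M.+1, w).
Proof.
move=> Mw; rewrite -(leq_pmul2l (ltn0Sn M)) mulnCA (mul_bin_down M.+1 w) mulnA leq_mul2r.
by apply/orP; right; lia.
Qed.

Lemma bin_mul_exp2_leq M t w : M + t <= 2 * w -> 'C(M, w) * 2 ^ t <= 'C(M + t, w).
Proof.
elim: t => [|t IH] Mtw; first by rewrite addn0 muln1.
rewrite expnS mulnCA addnS; apply: leq_trans (double_bin_leq_binS (M + t) w _); last lia.
by rewrite leq_mul2l IH ?orbT //; lia.
Qed.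

Lemma card_C4_lower n k : ~~ odd n -> 2 <= k -> k.*2 + 2 <= n ->
  2 ^ k * 'C(n - k - 2, n./2 - 2) <= 2 ^ k * #|C4 n k| + n * 'C(n - k - 2, n./2 - 2).
Proof.
move=> even_n k2 kn.
have n_half : n = n./2 + n./2 by rewrite -{1}(odd_double_half n) (negbTE even_n) addnn.
set N := n - k - 2; set w := n./2 - 2.
have bad : count (has_zero_run k) (weight_words N w) <= (N - k.-1) * 'C(N - k, w).
  by case: k k2 {kn} @N => // k _ N; exact: count_zero_run_weight_words.
have pow_bad : 'C(N - k, w) * 2 ^ k <= 'C(N, w).
  by rewrite -{2}(subnK (_ : k <= N)) ?bin_mul_exp2_leq //; rewrite /N /w; lia.
apply: (@leq_trans (2 ^ k * (#|C4 n k| + (N - k.-1) * 'C(N - k, w)))).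
  rewrite leq_mul2l; apply/orP; right.
  apply: leq_trans (bin_le_card_C4_runs n k _) _; first lia.
  by rewrite leq_add2l.
rewrite mulnDr leq_add2l mulnCA [2 ^ k * _]mulnC.
by apply: leq_mul pow_bad; lia.
Qed.

Lemma central_bin_rec m :
  m.+1 * m.+1 * 'C((2 * m).+2, m.+1) = (2 * m).+2 * (2 * m).+1 * 'C(2 * m, m).
Proof.
have down := mul_bin_down (2 * m).+1 m; rewrite /= (_ : (2 * m).+1 - m = m.+1) in down; last lia.
by rewrite -mulnA -(mul_bin_diag (2 * m).+2 m) mulnCA -down mulnA.
Qed.

Lemma cube_le_exp2 j : 10 <= j -> j * j * j <= 2 ^ j.
Proof.
elim: j => // j IH; rewrite leq_eqVlt => /orP [/eqP <- // | j10].
apply: leq_trans (_ : 2 * (j * j * j) <= _); last by rewrite expnS leq_mul2l IH.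
nia.
Qed.

(* The statement of [theorem8] writes [2 ^ m] with [Nat.pow]. *)
Lemma Nat_pow_expn a b : Nat.pow a b = expn a b.
Proof. by elim: b => //= b IH; rewrite expnS -IH. Qed.

Lemma exp2_ge_four_sq m a : 10 <= m + a -> 4 * 2 ^ a <= m + a ->
  4 * ((m + a) * (m + a)) <= 2 ^ m.
Proof.
move=> k10 k4A; have := cube_le_exp2 _ k10; rewrite expnD => cube.
rewrite -(leq_pmul2r (_ : 0 < m + a)); last lia.
apply: leq_trans (_ : 4 * (2 ^ m * 2 ^ a) <= _); first by rewrite -mulnA leq_mul2l cube orbT.
by rewrite mulnA [4 * _]mulnC -mulnA leq_mul2l k4A orbT.
Qed.

Lemma C4_exp2_bounds m a : 10 <= m + a -> 4 * 2 ^ a <= m + a ->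
  let k := m + a in
  exists z d, [/\ 0 < z, d <= 2 * z, 2 ^ m = d + 2 * z + k + 2,
                  d * d.+1 * k <= 2 ^ a * (4 * z)
                & 2 ^ a * 'C(2 * z + d, z + d)
                  <= 2 ^ a * #|C4 (2 ^ m) k| + 'C(2 * z + d, z + d)].
Proof.
move=> k10 k4A k; have n_big := exp2_ge_four_sq _ _ k10 k4A.
have m0 : 0 < m by case: (posnP m) n_big k10 => [->|//]; rewrite expn0; lia.
have cube := cube_le_exp2 _ k10; rewrite expnD in cube.
have half_n : 2 ^ m = 2 * (2 ^ m)./2 by rewrite -(prednK m0) expnS !mul2n doubleK.
pose n := 2 ^ m; rewrite -/k -/n in k10 k4A n_big cube half_n *.
have k_lin : 40 * k <= n by apply: leq_trans n_big; nia.
exists (n./2 - k), (k - 2); split; [lia | lia | lia | |].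
  apply: leq_trans (_ : k * k * k <= _); first by rewrite leq_mul2r leq_mul ?orbT; lia.
  by apply: leq_trans cube _; rewrite mulnC leq_mul2l; apply/orP; right; nia.
have even_n : ~~ odd n by rewrite half_n mul2n odd_double.
have := card_C4_lower _ _ even_n (_ : 1 < k) (_ : k.*2 + 2 <= n).
have -> : n - k - 2 = 2 * (n./2 - k) + (k - 2) by lia.
have -> : n./2 - 2 = n./2 - k + (k - 2) by lia.
rewrite expnD -/n -!mulnA -mulnDr leq_pmul2l ?expn_gt0 //; apply; lia.
Qed.

From Stdlib Require Import Reals Lra.
From Coquelicot Require Import Coquelicot.

(** * Wallis integrals and the asymptotic bound *)

Definition wallis (n : nat) : R := RInt (fun x => sin x ^ n) 0 (PI / 2).

Lemma ex_RInt_wallis n : ex_RInt (fun x => sin x ^ n) 0 (PI / 2).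
Proof.
apply: (@ex_RInt_continuous R_CompleteNormedModule) => x _.
by apply/continuity_pt_filterlim/derivable_continuous_pt; reg.
Qed.

Lemma wallis0 : wallis 0 = PI / 2.
Proof. by rewrite /wallis /= (@RInt_const R_CompleteNormedModule) /scal /= /mult /=; ring. Qed.

Lemma wallis1 : wallis 1 = 1.
Proof.
have der x : is_derive (fun x => - cos x) x (sin x ^ 1) by auto_derive; [|ring].
have cont x : continuous (fun x => sin x ^ 1) x.
  by apply/continuity_pt_filterlim/derivable_continuous_pt; reg.
have := is_RInt_derive _ _ 0 (PI / 2) (fun x _ => der x) (fun x _ => cont x).
rewrite /wallis => /is_RInt_unique ->; rewrite cos_PI2 cos_0 /minus /plus /opp /=; ring.
Qed.

(* Integration by parts, via the antiderivative [- cos x * sin x ^ p.+1]. *)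
Lemma wallis_rec p : INR p.+2 * wallis p.+2 = INR p.+1 * wallis p.
Proof.
set f := fun x => INR p.+2 * sin x ^ p.+2 - INR p.+1 * sin x ^ p.
have der x : is_derive (fun x => - cos x * sin x ^ p.+1) x (f x).
  auto_derive => //; rewrite /f -/(INR p.+1) !S_INR /=.
  have cos2 : cos x * cos x = 1 - sin x * sin x by rewrite -(sin2_cos2 x) /Rsqr; ring.
  rewrite (_ : - cos x * (1 * cos x * _) = - (cos x * cos x) * ((INR p + 1) * sin x ^ p)).
    by rewrite cos2; ring.
  ring.
have cont x : continuous f x.
  by apply/continuity_pt_filterlim/derivable_continuous_pt; rewrite /f; reg.
have int_f : RInt f 0 (PI / 2) = INR p.+2 * wallis p.+2 - INR p.+1 * wallis p.
  have ex_scal n c : ex_RInt (fun x => scal c (sin x ^ n)) 0 (PI / 2).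
    exact: ex_RInt_scal (ex_RInt_wallis n).
  rewrite /wallis -[INR p.+2 * _](RInt_scal _ _ _ _ (ex_RInt_wallis _)).
  rewrite -[INR p.+1 * _](RInt_scal _ _ _ _ (ex_RInt_wallis _)).
  by rewrite -[_ - _](RInt_minus _ _ _ _ (ex_scal _ _) (ex_scal _ _)).
have := is_RInt_derive _ _ 0 (PI / 2) (fun x _ => der x) (fun x _ => cont x).
move=> /is_RInt_unique; rewrite int_f cos_PI2 sin_0 pow_ne_zero // /minus /plus /opp /=.
lra.
Qed.

Lemma wallis_decr n : wallis n.+1 <= wallis n.
Proof.
have PI2 := PI2_RGT_0.
apply: RInt_le; try exact: ex_RInt_wallis; first lra.
move=> x x_range; have sin_ge0 : 0 <= sin x by apply: sin_ge_0; lra.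
have [_ sin_le1] := SIN_bound x.
by rewrite /= -[X in _ <= X]Rmult_1_l; apply: Rmult_le_compat_r; [exact: pow_le|].
Qed.

Lemma wallis_prod n : INR n.+1 * wallis n.+1 * wallis n = PI / 2.
Proof.
by elim: n => [|n IH]; [rewrite wallis1 wallis0 /=; ring | rewrite wallis_rec -IH; ring].
Qed.

Lemma INR_muln (a b : nat) : INR (muln a b) = INR a * INR b.
Proof. exact: mult_INR. Qed.

Lemma INR_addn (a b : nat) : INR (addn a b) = INR a + INR b.
Proof. exact: plus_INR. Qed.

Lemma INR_expn (a b : nat) : INR (expn a b) = INR a ^ b.
Proof. by elim: b => [|b IH] //; rewrite expnS INR_muln IH. Qed.

Lemma wallis_even m : wallis (2 * m) * 4 ^ m = PI / 2 * INR 'C(2 * m, m).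
Proof.
elim: m => [|m IH]; first by rewrite muln0 wallis0 bin0 /=; ring.
have -> : (2 * m.+1 = (2 * m).+2)%nat by lia.
have rec := wallis_rec (2 * m).
have bin := f_equal INR (central_bin_rec m).
rewrite !INR_muln !S_INR INR_muln /= in rec bin.
have m0 := pos_INR m.
have wallis_SS : wallis (2 * m).+2 = (2 * INR m + 1) / (2 * INR m + 2) * wallis (2 * m).
  by apply: (Rmult_eq_reg_l (2 * INR m + 1 + 1)); [rewrite rec; field | ]; lra.
have bin_SS : INR 'C((2 * m).+2, m.+1) =
    (2 * INR m + 2) * (2 * INR m + 1) / ((INR m + 1) * (INR m + 1)) * INR 'C(2 * m, m).
  by apply: (Rmult_eq_reg_l ((INR m + 1) * (INR m + 1))); [rewrite bin; field | ]; nra.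
rewrite wallis_SS bin_SS /=.
transitivity (4 * (2 * INR m + 1) / (2 * INR m + 2) * (wallis (2 * m) * 4 ^ m)).
  by field; lra.
by rewrite IH; field; lra.
Qed.

Lemma central_bin_lower m : 2 * (4 ^ m) ^ 2 <= PI * (2 * INR m + 1) * INR 'C(2 * m, m) ^ 2.
Proof.
have PI0 := PI_RGT_0.
have m0 := pos_INR m.
have even := wallis_even m.
have F0 : 0 < 4 ^ m by apply: pow_lt; lra.
have W0 : 0 <= wallis (2 * m).
  apply: (Rmult_le_reg_r (4 ^ m)) => //; rewrite Rmult_0_l even.
  by apply: Rmult_le_pos; [lra | exact: pos_INR].
have key : PI / 2 <= (2 * INR m + 1) * wallis (2 * m) ^ 2.
  have prod := wallis_prod (2 * m); rewrite S_INR INR_muln /= in prod.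
  have decr := wallis_decr (2 * m).
  have W0' : 0 <= (2 * INR m + 1) * wallis (2 * m) by apply: Rmult_le_pos; lra.
  have := Rmult_le_compat_l _ _ _ W0' decr; rewrite -prod /=; nra.
have : PI / 2 * (4 ^ m) ^ 2 <= (2 * INR m + 1) * (PI / 2 * INR 'C(2 * m, m)) ^ 2.
  rewrite -even Rpow_mult_distr -Rmult_assoc.
  by apply: Rmult_le_compat_r key; apply: pow_le; lra.
nra.
Qed.

(* The inductive step of [bin_shift_lower]: [r] is the ratio of consecutive binomials,
   and (1 - S) (1 - x) >= 1 - (S + x). *)
Lemma one_sub_sum_step P S x r X :
  0 <= P -> 0 <= S -> 0 <= x <= 1 -> 2 * (1 - x) <= r -> 0 <= X -> P * (1 - S) <= X ->
  2 * P * (1 - (S + x)) <= r * X.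
Proof.
move=> P0 S0 x01 r_ge X0 PX.
have rX0 : 0 <= r * X by apply: Rmult_le_pos; lra.
case: (Rle_lt_dec 0 (1 - S)) => [S1 | S1]; last by nra.
have PS0 : 0 <= P * (1 - S) by nra.
have : r * (P * (1 - S)) <= r * X by apply: Rmult_le_compat_l; lra.
have : 2 * (1 - x) * (P * (1 - S)) <= r * (P * (1 - S)) by exact: Rmult_le_compat_r.
have : 0 <= P * S * x by apply: Rmult_le_pos; nra.
nra.
Qed.

Lemma bin_shift_lower z d : (1 <= z)%nat -> (d <= 2 * z)%nat ->
  2 ^ d * INR 'C(2 * z, z) * (1 - INR d * (INR d + 1) / (4 * INR z))
  <= INR 'C(2 * z + d, z + d).
Proof.
move=> z1; elim: d => [|d IH] dz.
  by rewrite !addn0 /= Rmult_0_l /Rdiv Rmult_0_l; lra.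
have z1R : 1 <= INR z by apply: (le_INR 1); lia.
have d0 := pos_INR d.
have dzR : INR d + 1 <= 2 * INR z.
  by have := le_INR _ _ (ssrnat.leP dz); rewrite S_INR INR_muln.
rewrite !addnS.
set X := INR 'C(2 * z + d, z + d) in IH *.
set X' := INR 'C((2 * z + d).+1, (z + d).+1).
have rec : INR (z + d).+1 * X' = INR (2 * z + d).+1 * X.
  by rewrite -!INR_muln -(mul_bin_diag (2 * z + d).+1 (z + d)).
have Ez : INR (z + d).+1 = INR z + INR d + 1 by rewrite S_INR INR_addn.
have E2z : INR (2 * z + d).+1 = 2 * INR z + INR d + 1.
  by rewrite S_INR INR_addn INR_muln.
rewrite Ez E2z in rec.
have step : X' = (2 * INR z + INR d + 1) / (INR z + INR d + 1) * X.
  by apply: (Rmult_eq_reg_l (INR z + INR d + 1)); [rewrite rec; field | ]; lra.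
have ratio_ge : 2 * (1 - (INR d + 1) / (2 * INR z))
    <= (2 * INR z + INR d + 1) / (INR z + INR d + 1).
  have -> : (2 * INR z + INR d + 1) / (INR z + INR d + 1) = 2 * (1 - (INR d + 1) / (2 * INR z))
      + (INR d + 1) * (INR d + 1) / (INR z * (INR z + INR d + 1)) by field; lra.
  have : 0 <= (INR d + 1) * (INR d + 1) / (INR z * (INR z + INR d + 1)).
    by apply: Rmult_le_pos; [nra | apply/Rlt_le/Rinv_0_lt_compat; nra].
  lra.
have X0 : 0 <= X by exact: pos_INR.
rewrite step S_INR.
have -> : 2 ^ d.+1 * INR 'C(2 * z, z) * (1 - (INR d + 1) * (INR d + 1 + 1) / (4 * INR z))
    = 2 * (2 ^ d * INR 'C(2 * z, z))
      * (1 - (INR d * (INR d + 1) / (4 * INR z) + (INR d + 1) / (2 * INR z))).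
  by rewrite /=; field; lra.
apply: one_sub_sum_step => //; last exact: IH (ltnW dz).
- by apply: Rmult_le_pos; [apply: pow_le; lra | exact: pos_INR].
- by apply: Rmult_le_pos; [nra | apply/Rlt_le/Rinv_0_lt_compat; lra].
- split; last by apply/Rle_div_l; lra.
  by apply: Rmult_le_pos; [lra | apply/Rlt_le/Rinv_0_lt_compat; lra].
Qed.

(* Used with c = #|C4 n k|, X = 'C(2z+d, z+d), C0 = 'C(2z, z), D = 2^d, F = 4^z, A = 2^a,
   N = n and Z = z, for which 2^n = D F (N A) 4. *)
Lemma ratio_lower_of_bounds (c X C0 D F A N Z e : R) :
  2 <= A -> 0 < D -> 0 < F -> 0 < N -> 2 * Z + 1 <= N -> 0 <= C0 -> e <= 1 ->
  A * X <= A * c + X -> D * C0 * (1 - e) <= X -> 2 * F ^ 2 <= PI * (2 * Z + 1) * C0 ^ 2 ->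
  (A - 1) / (2 * A ^ 2 * sqrt (2 * PI)) * (1 - e)
  <= c / (D * F * (N * A) * 4 / (N * sqrt N)).
Proof.
move=> A2 D0 F0 N0 ZN C00 e1 cX XC0 central.
have PI0 := PI_RGT_0.
have C0N : PI * (2 * Z + 1) * C0 ^ 2 <= PI * N * C0 ^ 2.
  by apply: Rmult_le_compat_r; [exact: pow2_ge_0 | apply: Rmult_le_compat_l; lra].
have sN0 := sqrt_lt_R0 N N0.
have Q0 : 0 < sqrt (2 * PI) by apply: sqrt_lt_R0; lra.
set K := (A - 1) / A * (D * (1 - e)).
have K0 : 0 <= K.
  by apply: Rmult_le_pos; [apply: Rmult_le_pos; [lra | apply/Rlt_le/Rinv_0_lt_compat; lra] | nra].
have C0_ge : 2 * F <= C0 * sqrt N * sqrt (2 * PI).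
  apply: Rsqr_incr_0_var; last by apply: Rmult_le_pos; [apply: Rmult_le_pos|]; lra.
  rewrite /Rsqr (_ : C0 * sqrt N * sqrt (2 * PI) * (C0 * sqrt N * sqrt (2 * PI))
                     = C0 ^ 2 * (sqrt N * sqrt N) * (sqrt (2 * PI) * sqrt (2 * PI))); last ring.
  rewrite !sqrt_sqrt; nra.
have c_ge : K * C0 <= c.
  apply: (Rmult_le_reg_l A); first lra.
  have -> : A * (K * C0) = (A - 1) * (D * C0 * (1 - e)) by rewrite /K; field; lra.
  have : (A - 1) * (D * C0 * (1 - e)) <= (A - 1) * X by apply: Rmult_le_compat_l; lra.
  lra.
have -> : c / (D * F * (N * A) * 4 / (N * sqrt N)) = c * sqrt N / (D * F * A * 4) by field; lra.
have DFA0 : 0 < D * F * A * 4.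
  by apply: Rmult_lt_0_compat; [apply: Rmult_lt_0_compat; [apply: Rmult_lt_0_compat|]|]; lra.
apply/(Rle_div_r _ _ _ DFA0).
apply: (Rle_trans _ (K * (C0 * sqrt N))); last first.
  by rewrite -Rmult_assoc; apply: Rmult_le_compat_r; [lra | exact: c_ge].
have -> : (A - 1) / (2 * A ^ 2 * sqrt (2 * PI)) * (1 - e) * (D * F * A * 4)
    = K * (2 * F / sqrt (2 * PI)) by rewrite /K; field; lra.
by apply: Rmult_le_compat_l => //; apply/Rle_div_l.
Qed.

Lemma C4_ratio_lower (m a : nat) :
  (1 <= a)%nat -> (10 <= m + a)%nat -> (4 * expn 2 a <= m + a)%nat ->
  let n := expn 2 m in
  (2 ^ a - 1) / (2 ^ (2 * a + 1) * sqrt (2 * PI)) * (1 - 2 ^ a / INR (m + a))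
  <= INR #|C4 n (m + a)| / (2 ^ n / (INR n * sqrt (INR n))).
Proof.
move=> a1 k10 k4A n.
have [z [d [z0 dz n_sum err card]]] := C4_exp2_bounds _ _ k10 k4A.
rewrite -/n in n_sum card.
pose k := (m + a)%nat; rewrite -/k in k10 k4A n_sum err card *.
have exp_k : expn 2 k = (n * expn 2 a)%nat by rewrite expnD.
clearbody n k.
have AR : INR (expn 2 a) = 2 ^ a by rewrite INR_expn.
have A2 : 2 <= 2 ^ a by rewrite -{1}(pow_1 2); apply: Rle_pow; [lra | apply/ssrnat.leP].
have kA : 4 * 2 ^ a <= INR k.
  by have := le_INR _ _ (ssrnat.leP k4A); rewrite INR_muln AR; simpl INR; lra.
have zR : 1 <= INR z by apply: (le_INR 1); apply/ssrnat.leP.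
have errR : INR d * (INR d + 1) / (4 * INR z) <= 2 ^ a / INR k.
  have := le_INR _ _ (ssrnat.leP err); rewrite !INR_muln S_INR AR; simpl INR => errR.
  apply/Rle_div_l; first lra.
  rewrite (_ : 2 ^ a / INR k * (4 * INR z) = 2 ^ a * (4 * INR z) / INR k); last by field; lra.
  by apply/(Rle_div_r _ _ _ (_ : INR k > 0)); lra.
have X_ge : 2 ^ d * INR 'C(2 * z, z) * (1 - 2 ^ a / INR k) <= INR 'C(2 * z + d, z + d).
  apply: Rle_trans (bin_shift_lower z d z0 dz); apply: Rmult_le_compat_l; last lra.
  by apply: Rmult_le_pos; [apply: pow_le; lra | exact: pos_INR].
have zn : 2 * INR z + 1 <= INR n.
  have zn : (2 * z + 1 <= n)%nat by lia.
  by have := le_INR _ _ (ssrnat.leP zn); rewrite INR_addn INR_muln; simpl INR; lra.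
have pow_n : 2 ^ n = 2 ^ d * 4 ^ z * (INR n * 2 ^ a) * 4.
  rewrite -AR -INR_muln -exp_k INR_expn {1}n_sum !pow_add.
  rewrite (_ : 4 ^ z = 2 ^ z * 2 ^ z); last by rewrite -Rpow_mult_distr; f_equal; lra.
  by rewrite (_ : INR 2 = 2); [ring | simpl; ring].
have cardR : 2 ^ a * INR 'C(2 * z + d, z + d)
    <= 2 ^ a * INR #|C4 n k| + INR 'C(2 * z + d, z + d).
  by have := le_INR _ _ (ssrnat.leP card); rewrite INR_addn !INR_muln AR.
have e1 : 2 ^ a / INR k <= 1 by apply/Rle_div_l; lra.
rewrite pow_n (_ : 2 ^ (2 * a + 1) = 2 * (2 ^ a) ^ 2); last by rewrite !pow_add; ring.
apply: (ratio_lower_of_bounds _ _ _ _ _ _ _ _ _ A2 _ _ _ zn (pos_INR _) e1 cardR X_ge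
         (central_bin_lower z)).
- by apply: pow_lt; lra.
- by apply: pow_lt; lra.
- by apply: lt_0_INR; apply/ssrnat.ltP; lia.
Qed.

Lemma C4_constant_bounds (a : nat) :
  0 <= (2 ^ a - 1) / (2 ^ (2 * a + 1) * sqrt (2 * PI)) <= 1.
Proof.
have A1 : 1 <= 2 ^ a by apply: pow_R1_Rle; lra.
have Q1 : 1 <= sqrt (2 * PI) by rewrite -sqrt_1; apply: sqrt_le_1_alt; have := PI2_1; lra.
have P : 2 ^ a <= 2 ^ (2 * a + 1) by apply: Rle_pow; [lra | apply/ssrnat.leP; lia].
split; first by apply: Rmult_le_pos; [lra | apply/Rlt_le/Rinv_0_lt_compat; nra].
by apply/Rle_div_l; nra.
Qed.

(* Coquelicot opens [R_scope]; the statement below is read in the default scopes. *)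
Close Scope R_scope.

Theorem theorem8 :
  (forall n k : nat, ~~ odd n -> (1 <= k)%N -> (k <= n./2)%N ->
     balanced_MU (C4 n k))
  /\
  (forall a : nat, (1 <= a)%N ->
     forall eps : R, (0 < eps)%R ->
     exists M : nat, forall m : nat, (M <= m)%N ->
       let n := (2 ^ m)%N in
       (INR #|C4 n (m + a)| / (2 ^ n / (INR n * sqrt (INR n)))
          >= (2 ^ a - 1) / (2 ^ (2 * a + 1) * sqrt (2 * PI)) - eps)%R).
Proof.
split=> [n k even_n k1 _ | a a1 eps eps0].
  by split=> [|w]; [exact: C4_MU | exact: C4_balanced].
have A0 : (0 < 2 ^ a)%R by apply: pow_lt; lra.
have [K [_ AK]] := nfloor_ex (2 ^ a / eps) (Rlt_le _ _ (Rdiv_lt_0_compat _ _ A0 eps0)).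
exists (maxn (maxn 10 (4 * expn 2 a)) K.+1) => m Mm n.
have k_lb : (maxn (maxn 10 (4 * expn 2 a)) K.+1 <= m + a)%N by lia.
have k0 : (0 < INR (m + a))%R by apply/lt_0_INR/ssrnat.ltP; lia.
have e_eps : (2 ^ a / INR (m + a) <= eps)%R.
  have kK : (INR K + 1 <= INR (m + a))%R by rewrite -S_INR; apply/le_INR/ssrnat.leP; lia.
  have AK' := proj1 (Rlt_div_l _ _ _ eps0) AK.
  by apply/Rle_div_l; nra.
have e0 : (0 <= 2 ^ a / INR (m + a))%R.
  by apply: Rmult_le_pos; [lra | apply/Rlt_le/Rinv_0_lt_compat].
have [T0 T1] := C4_constant_bounds a.
rewrite /n Nat_pow_expn; apply: Rle_ge.
apply: Rle_trans (C4_ratio_lower m a a1 _ _); [nra | lia | lia].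
Qed.
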